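(* Let $I$ be any set of nonnegative integers. Let $\mathcal A_I$ be the class of simple graphs whose degree sequence $d$ satisfies $\Delta_{m(d)}(d)\in I$, and let $\mathcal B_I$ be the class of simple graphs whose degree sequence $d$ satisfies $\Delta^*(d)\in I$. Then both $\mathcal A_I$ and $\mathcal B_I$ are closed under graph complementation. In particular (taking $\mathcal A_{\{0\}}$, $\mathcal B_{\{0\}}$, $\mathcal B_{\{0,1\}}$) the classes of split graphs, threshold graphs, and weakly threshold graphs are closed under complementation.
   Context: Degree sequences $d=(d_1,\dots,d_n)$ are listed in nonincreasing order. $m(d)=\max\{i : d_i\ge i-1\}$. For integers $k\ge 0$, $\Delta_k(d)=k(k-1)+\sum_{i>k}\min\{k,d_i\}-\sum_{i\le k}d_i$, and $\Delta^*(d)=\max\{\Delta_k(d):1\le k\le m(d)\}$. A split graph is one whose vertex set partitions into a clique and an independent set; a graph with degree sequence $d$ is split iff $\Delta_{m(d)}(d)=0$. A graph with degree sequence $d$ is threshold iff $\Delta_k(d)=0$ for all $1\le k\le m(d)$ (i.e. $\Delta^*(d)=0$). A graph is weakly threshold iff its degree sequence $d$ satisfies $\Delta_k(d)\le 1$ for all $1\le k\le m(d)$. *)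

From mathcomp Require Import all_boot all_order all_algebra.
Set Implicit Arguments. Unset Strict Implicit. Unset Printing Implicit Defensive.
Import Order.TTheory GRing.Theory Num.Theory.

Definition simple_graph (T : finType) (e : rel T) : Prop :=
  symmetric e /\ irreflexive e.

Definition compl_graph (T : finType) (e : rel T) : rel T :=
  fun x y => (x != y) && ~~ e x y.

Definition degree (T : finType) (e : rel T) (x : T) : nat := #|[pred y | e x y]|.

Definition deg_seq (T : finType) (e : rel T) : seq nat :=
  sort geq [seq degree e x | x <- enum T].

(* d_i with 1-based indexing: d_i = nth 0 d (i-1). *)
Definition dd (d : seq nat) (i : nat) : nat := nth 0 d i.-1.

(* m(d) = max { i : d_i >= i - 1 }, i ranging over 1..n (0 for the empty seq). *)
Definition mval (d : seq nat) : nat :=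
  \max_(1 <= i < (size d).+1 | i.-1 <= dd d i) i.

Definition Delta (d : seq nat) (k : nat) : int :=
  ((k * k.-1)%:Z + \sum_(k.+1 <= i < (size d).+1) (minn k (dd d i))%:Z
    - \sum_(1 <= i < k.+1) (dd d i)%:Z)%R.

(* Delta^*(d) = max { Delta_k(d) : 1 <= k <= m(d) }.  The seed Delta_1(d) is
   harmless since m(d) >= 1 whenever d is nonempty (and Delta_1([::]) = 0). *)
Definition DeltaStar (d : seq nat) : int :=
  \big[Order.max/Delta d 1]_(1 <= k < (mval d).+1) Delta d k.

Definition classA (I : pred nat) (T : finType) (e : rel T) : Prop :=
  exists2 n : nat, Delta (deg_seq e) (mval (deg_seq e)) = Posz n & n \in I.

Definition classB (I : pred nat) (T : finType) (e : rel T) : Prop :=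
  exists2 n : nat, DeltaStar (deg_seq e) = Posz n & n \in I.

From mathcomp Require Import all_boot all_order all_algebra zify.
Set Implicit Arguments. Unset Strict Implicit. Unset Printing Implicit Defensive.
Import Order.TTheory.

(* Degree sequences are handled as functions a : nat -> nat indexed from 0, so
   a_0 >= ... >= a_{n-1} with all a_i <= n-1; the complement graph has degree
   sequence b_i = (n-1) - a_{n-1-i}, the dual of a.  Everything is phrased with
   the slack  sigma_a(k) = sum_{k<=i<n} min(k, a_i) - sum_{i<k} (a_i - (k-1))^+,
   which equals Delta_k(d) whenever the first k terms are >= k-1, in particular
   for 1 <= k <= m(d).  Three facts about slacks do all the work:
   - duality: sigma_b(k) = sigma_a(n-k), a pure counting identity;
   - descent: a_p <= p implies sigma_a(p) <= sigma_a(a_p), so every sigma_a(p)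
     with 0 <= p <= n is at most max_{1<=k<=m} sigma_a(k) once sigma_a(1) >= 0;
   - near m: m(b) is n - m(a) or n - m(a) + 1, and in the latter case
     sigma_a(m(a)) = sigma_a(m(a) - 1).
   Duality with descent gives Delta^*(a) <= Delta^*(b) and, symmetrically,
   equality; duality with the last fact gives Delta_{m(a)}(a) = Delta_{m(b)}(b). *)

Definition nonincr (n : nat) (a : nat -> nat) : Prop :=
  forall i j, i <= j -> j < n -> a j <= a i.

Definition bounded (n : nat) (a : nat -> nat) : Prop :=
  forall i, i < n -> a i <= n.-1.

Definition dual_seq (n : nat) (b a : nat -> nat) : Prop :=
  forall i, i < n -> b i = n.-1 - a (n.-1 - i).

Definition tail_mass (n : nat) (a : nat -> nat) (k : nat) : nat :=
  \sum_(k <= i < n) minn k (a i).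
Definition head_excess (a : nat -> nat) (k : nat) : nat :=
  \sum_(0 <= i < k) (a i - k.-1).
Definition slack (n : nat) (a : nat -> nat) (k : nat) : int :=
  ((tail_mass n a k)%:Z - (head_excess a k)%:Z)%R.

Lemma sum_reflect (F : nat -> nat) lo hi N : lo <= hi -> hi <= N.+1 ->
  \sum_(lo <= i < hi) F (N - i) = \sum_(N.+1 - hi <= j < N.+1 - lo) F j.
Proof.
move=> le_lo_hi; elim: hi le_lo_hi => [|hi IH].
  by rewrite leqn0 => /eqP -> _; rewrite !big_geq.
rewrite leq_eqVlt => /orP[/eqP <- _|lt_lo_hi le_hi_N]; first by rewrite !big_geq.
rewrite big_nat_recr //= IH //; last lia.
rewrite (@big_ltn _ _ _ (N.+1 - hi.+1)); last lia.
have -> : (N.+1 - hi.+1).+1 = N.+1 - hi by lia.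
by rewrite addnC; do 2!congr (_ + _); congr F; lia.
Qed.

(* Duality: the slack of the dual sequence at k is that of a at n-k.  After
   reflecting the index range, both identities below reduce termwise to
   min(k, x) + (k - x)^+ = k. *)
Lemma slack_dual n a b k : bounded n a -> dual_seq n b a -> k <= n ->
  slack n b k = slack n a (n - k).
Proof.
move=> a_bnd b_dual le_k_n.
case: n a_bnd b_dual le_k_n => [|n] a_bnd b_dual le_k_n.
  by move: le_k_n; rewrite leqn0 => /eqP ->; rewrite /slack /tail_mass /head_excess !big_geq.
set q := n.+1 - k.
have tail_b : tail_mass n.+1 b k + head_excess a q = q * k.
  have -> : tail_mass n.+1 b k = \sum_(k <= i < n.+1) minn k (n - a (n - i)).
    by apply: eq_big_nat => i ik; rewrite b_dual //; lia.
  rewrite (@sum_reflect (fun j => minn k (n - a j))) // subnn /head_excess -big_split /=.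
  have -> : q * k = \sum_(0 <= i < q) k by rewrite sum_nat_const_nat subn0.
  apply: eq_big_nat => i iq.
  by have := a_bnd i ltac:(lia); rewrite /q; lia.
have head_b : tail_mass n.+1 a q + head_excess b k = k * q.
  have -> : head_excess b k = \sum_(0 <= i < k) (n - a (n - i) - k.-1).
    by apply: eq_big_nat => i ik; rewrite b_dual //; lia.
  rewrite (@sum_reflect (fun j => n - a j - k.-1)) // subn0 /tail_mass -big_split /=.
  have -> : k * q = \sum_(q <= i < n.+1) q by rewrite sum_nat_const_nat /q; congr (_ * _); lia.
  apply: eq_big_nat => i iq.
  by have := a_bnd i ltac:(lia); rewrite /q in iq *; lia.
rewrite /slack; lia.
Qed.

Lemma slack0 n a : slack n a 0 = 0%R.
Proof.
rewrite /slack /head_excess big_geq // /tail_mass big1 // => i _.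
by rewrite min0n.
Qed.

Lemma slack_full n a : bounded n a -> slack n a n = 0%R.
Proof.
move=> a_bnd; rewrite /slack /tail_mass /head_excess big_geq // big1_seq // => i.
by rewrite mem_index_iota => /andP[_ /andP[_ lt_in]]; have := a_bnd i lt_in; lia.
Qed.

(* The index m(a), 0-indexed: every j with a_j >= j lies below m, m <= n, and
   the first m terms are all at least m-1 (so the maximum is attained). *)
Definition is_mindex (n : nat) (a : nat -> nat) (m : nat) : Prop :=
  [/\ forall j, j < n -> j <= a j -> j < m, m <= n & forall i, i < m -> m.-1 <= a i].

Lemma mindex_gt0 n a m : is_mindex n a m -> 0 < n -> 0 < m.
Proof. by case=> below_m _ _ n_gt0; apply: below_m. Qed.

(* The maximal slack over 1 <= k <= m, i.e. Delta^* once slack and Delta agree. *)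
Definition max_slack (n : nat) (a : nat -> nat) (m : nat) : int :=
  \big[Order.max/slack n a 1]_(1 <= k < m.+1) slack n a k.

Section NonincreasingSlack.
Variables (n : nat) (a : nat -> nat).
Hypothesis a_nonincr : nonincr n a.

Lemma slack_descent p : p < n -> a p <= p -> (slack n a p <= slack n a (a p))%R.
Proof.
move=> lt_pn le_ap_p; set k := a p.
have tail_k : tail_mass n a k = (p - k) * k + \sum_(p <= i < n) a i.
  rewrite /tail_mass (@big_cat_nat _ _ _ p) //=; last lia.
  congr (_ + _).
    rewrite -sum_nat_const_nat; apply: eq_big_nat => i ip.
    by have := @a_nonincr i p ltac:(lia) lt_pn; rewrite -/k; lia.
  apply: eq_big_nat => i ip.
  by have := @a_nonincr p i ltac:(lia) ltac:(lia); rewrite -/k; lia.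
have tail_p : tail_mass n a p = \sum_(p <= i < n) a i.
  apply: eq_big_nat => i ip.
  by have := @a_nonincr p i ltac:(lia) ltac:(lia); rewrite -/k; lia.
have head_p : \sum_(0 <= i < k) (a i - p.-1) <= head_excess a p.
  by rewrite /head_excess [X in _ <= X](@big_cat_nat _ _ _ k) //= leq_addr.
have head_k : head_excess a k <= \sum_(0 <= i < k) (a i - p.-1) + k * (p - k).
  have -> : k * (p - k) = \sum_(0 <= i < k) (p - k) by rewrite sum_nat_const_nat subn0.
  rewrite /head_excess -big_split /= big_nat_cond [X in _ <= X]big_nat_cond.
  apply: leq_sum => i /andP[ik _].
  by have := @a_nonincr i p ltac:(lia) lt_pn; rewrite -/k; lia.
rewrite /slack; lia.
Qed.

Lemma slack_flat m : 0 < m -> m <= n -> a m.-1 = m.-1 ->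
  (forall i, i < m -> m.-1 <= a i) -> slack n a m = slack n a m.-1.
Proof.
move=> m_gt0 le_mn am head_ge.
have small_tail i : m <= i < n -> a i <= m.-1.
  by move=> im; have := @a_nonincr m.-1 i ltac:(lia) ltac:(lia); lia.
have tail_m : tail_mass n a m = \sum_(m <= i < n) a i.
  by apply: eq_big_nat => i im; have := small_tail i im; lia.
have tail_m1 : tail_mass n a m.-1 = m.-1 + \sum_(m <= i < n) a i.
  rewrite /tail_mass big_ltn; last lia.
  rewrite prednK // am minnn; congr (_ + _).
  by apply: eq_big_nat => i im; have := small_tail i im; lia.
have head_m : head_excess a m = \sum_(0 <= i < m.-1) (a i - m.-1).
  rewrite /head_excess -{1}(prednK m_gt0) big_nat_recr //=.
  by rewrite am subnn addn0.
have head_m1 : head_excess a m.-1 = \sum_(0 <= i < m.-1) (a i - m.-1) + m.-1.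
  have -> : head_excess a m.-1 = \sum_(0 <= i < m.-1) ((a i - m.-1) + 1).
    by apply: eq_big_nat => i im; have := head_ge i ltac:(lia); lia.
  by rewrite big_split sum_nat_const_nat subn0 muln1.
rewrite /slack tail_m tail_m1 head_m head_m1; lia.
Qed.

(* Every slack sigma(p), 0 <= p <= n, is dominated by the maximal slack over
   1 <= k <= m: positions beyond m descend into [0, m] by slack_descent. *)
Lemma slack_le_max_slack m p : bounded n a -> is_mindex n a m -> 0 < n ->
  (0 <= slack n a 1)%R -> p <= n -> (slack n a p <= max_slack n a m)%R.
Proof.
move=> a_bnd a_m n_gt0 slack1_ge0 le_pn.
have m_gt0 := mindex_gt0 a_m n_gt0; case: a_m => below_m le_mn _.
have max_ge0 : (0 <= max_slack n a m)%R by apply: le_trans slack1_ge0 (bigmax_ge_id _ _ _ _).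
have le_max k : 1 <= k <= m -> (slack n a k <= max_slack n a m)%R.
  by move=> k1m; apply: le_bigmax_seq => //; rewrite mem_index_iota; lia.
have [->|p_gt0] := posnP p; first by rewrite slack0.
have [le_pm|lt_mp] := leqP p m; first by apply: le_max; lia.
have [lt_pn|ge_pn] := ltnP p n; last by (suff -> : p = n by rewrite slack_full); lia.
have lt_ap_p : a p < p.
  by rewrite ltnNge; apply/negP => le_p_ap; have := below_m p lt_pn le_p_ap; lia.
apply: le_trans (slack_descent lt_pn (ltnW lt_ap_p)) _.
have le_ap_m : a p <= m.
  rewrite leqNgt; apply/negP => lt_m_ap.
  by have := below_m (a p) ltac:(lia) (@a_nonincr (a p) p (ltnW lt_ap_p) lt_pn); lia.
have [->|ap_gt0] := posnP (a p); first by rewrite slack0.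
by apply: le_max; lia.
Qed.

End NonincreasingSlack.

Lemma dual_seq_sym n a b : bounded n a -> dual_seq n b a -> dual_seq n a b.
Proof.
move=> a_bnd b_dual i lt_in.
have := b_dual (n.-1 - i) ltac:(lia); have := a_bnd i lt_in.
have -> : n.-1 - (n.-1 - i) = i by lia.
lia.
Qed.

(* Half of Delta^*-invariance: each slack of a at 1 <= k <= m(a) is a slack of
   the dual sequence b, hence below the maximal slack of b. *)
Lemma max_slack_dual_le n a b ma mb : 0 < n -> nonincr n b -> bounded n a -> bounded n b ->
  dual_seq n a b -> is_mindex n a ma -> is_mindex n b mb -> (0 <= slack n b 1)%R ->
  (max_slack n a ma <= max_slack n b mb)%R.
Proof.
move=> n_gt0 b_nonincr a_bnd b_bnd a_dual [_ le_ma_n _] b_m slack1_ge0.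
have slack_a k : k <= n -> slack n a k = slack n b (n - k).
  by move=> le_kn; apply: slack_dual.
rewrite /max_slack big_nat_cond.
by apply: bigmax_le => [|k /andP[k_range _]]; rewrite slack_a ?slack_le_max_slack //; lia.
Qed.

(* Delta_m-invariance: m(b) is n - m(a) or n - m(a) + 1; in the second case the
   slack of a is flat at m(a). *)
Lemma slack_mindex_dual n a b ma mb : 0 < n -> nonincr n a -> bounded n a ->
  dual_seq n b a -> is_mindex n a ma -> is_mindex n b mb -> slack n a ma = slack n b mb.
Proof.
move=> n_gt0 a_nonincr a_bnd b_dual a_m b_m.
have ma_gt0 := mindex_gt0 a_m n_gt0; have mb_gt0 := mindex_gt0 b_m n_gt0.
case: a_m => below_ma le_ma_n head_a; case: b_m => below_mb le_mb_n head_b.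
rewrite (slack_dual a_bnd b_dual le_mb_n).
have mb_lo : n - ma <= mb.
  have [lt_ma_n|] := ltnP ma n; last lia.
  have lt_a_ma : a ma < ma.
    by rewrite ltnNge; apply/negP => le_ma_a; have := below_ma ma lt_ma_n le_ma_a; lia.
  have := below_mb (n - ma).-1 ltac:(lia); rewrite b_dual; last lia.
  have -> : n.-1 - (n - ma).-1 = ma by lia.
  by move/(_ ltac:(lia)); lia.
have mb_hi : mb <= n - ma + 1.
  rewrite leqNgt; apply/negP => lt_mb.
  have := head_b mb.-1 ltac:(lia); rewrite b_dual; last lia.
  by have := head_a (n.-1 - mb.-1) ltac:(lia); lia.
have [|gt_mb|eq_mb] := ltngtP mb (n - ma); first lia.
  have -> : n - mb = ma.-1 by lia.
  rewrite slack_flat //.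
  have := head_b (n - ma) ltac:(lia); rewrite b_dual; last lia.
  have -> : n.-1 - (n - ma) = ma.-1 by lia.
  by have := head_a ma.-1 ltac:(lia); have := a_bnd ma.-1 ltac:(lia); lia.
by rewrite eq_mb; congr slack; lia.
Qed.

Lemma Delta_slack d k : (forall i, i < k -> k.-1 <= nth 0 d i) ->
  Delta d k = slack (size d) (nth 0 d) k.
Proof.
move=> head_ge.
have sumZ lo hi (F : nat -> nat) :
    (\sum_(lo <= i < hi) Posz (F i))%R = Posz (\sum_(lo <= i < hi) F i).
  by rewrite (big_morph Posz PoszD (erefl (Posz 0))).
rewrite /Delta /slack /tail_mass /head_excess !big_add1 /= !sumZ.
have -> : \sum_(0 <= i < k) dd d i.+1 = \sum_(0 <= i < k) (nth 0 d i - k.-1) + k * k.-1.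
  have -> : k * k.-1 = \sum_(0 <= i < k) k.-1 by rewrite sum_nat_const_nat subn0.
  rewrite -big_split /=.
  by apply: eq_big_nat => i ik; have := head_ge i ltac:(lia); rewrite /dd /=; lia.
rewrite /dd /=; lia.
Qed.

Lemma geq_trans : transitive geq.
Proof. by move=> x y z /= le_yx le_zy; apply: leq_trans le_zy le_yx. Qed.

Lemma sorted_nonincr d : sorted geq d -> nonincr (size d) (nth 0 d).
Proof.
move=> d_sorted i j le_ij lt_jd.
have := sorted_leq_nth geq_trans (@leqnn) 0 d_sorted; rewrite /prop_in2 /= => nth_homo.
by apply: nth_homo; rewrite ?inE; lia.
Qed.

Lemma mval_mindex d : sorted geq d -> is_mindex (size d) (nth 0 d) (mval d).
Proof.
move=> d_sorted; have d_nonincr := sorted_nonincr d_sorted.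
have below_m j : j < size d -> j <= nth 0 d j -> j < mval d.
  by move=> lt_jd le_j; apply: (leq_bigmax_seq j.+1) => //; rewrite mem_index_iota; lia.
split => //; first by apply/bigmax_leqP_seq => i; rewrite mem_index_iota; lia.
move=> i lt_im; rewrite leqNgt; apply/negP => lt_ai.
have : mval d <= (mval d).-1.
  apply/bigmax_leqP_seq => j; rewrite mem_index_iota /dd => j_range le_j.
  have [le_ij|] := leqP i j.-1; last lia.
  by have := d_nonincr i j.-1 le_ij ltac:(lia); lia.
lia.
Qed.

Lemma DeltaStar_max_slack d : sorted geq d ->
  DeltaStar d = max_slack (size d) (nth 0 d) (mval d).
Proof.
move=> d_sorted; case: (mval_mindex d_sorted) => _ _ head_ge.
rewrite /DeltaStar /max_slack Delta_slack; last by move=> i _; lia.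
apply: eq_big_nat => k k_range; apply: Delta_slack => i lt_ik.
by have := head_ge i ltac:(lia); lia.
Qed.

Definition compl_seq (d : seq nat) : seq nat := [seq (size d).-1 - x | x <- rev d].

Lemma size_compl_seq d : size (compl_seq d) = size d.
Proof. by rewrite size_map size_rev. Qed.

Lemma compl_seq_dual d : dual_seq (size d) (nth 0 (compl_seq d)) (nth 0 d).
Proof.
move=> i lt_id; rewrite (nth_map 0) ?size_rev // nth_rev //.
by congr (_ - nth 0 d _); lia.
Qed.

Lemma bounded_compl_seq d : bounded (size d) (nth 0 (compl_seq d)).
Proof. by move=> i lt_id; rewrite compl_seq_dual // leq_subr. Qed.

Lemma sorted_compl_seq d : sorted geq d -> sorted geq (compl_seq d).
Proof.
move=> d_sorted; apply: (@homo_sorted _ _ _ leq); first by move=> x y le_xy; apply: leq_sub2l.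
by rewrite rev_sorted.
Qed.

Lemma Delta_mval_compl_seq d : sorted geq d -> bounded (size d) (nth 0 d) ->
  Delta (compl_seq d) (mval (compl_seq d)) = Delta d (mval d).
Proof.
move=> d_sorted d_bnd.
case: (posnP (size d)) => [/size0nil -> //|d_gt0].
have dc_sorted := sorted_compl_seq d_sorted.
have d_m := mval_mindex d_sorted; have dc_m := mval_mindex dc_sorted.
rewrite size_compl_seq in dc_m.
case: (d_m) => _ _ head_d; case: (dc_m) => _ _ head_dc.
rewrite !Delta_slack // size_compl_seq.
symmetry; apply: slack_mindex_dual d_gt0 (sorted_nonincr d_sorted) d_bnd _ d_m dc_m.
exact: compl_seq_dual.
Qed.

Lemma DeltaStar_compl_seq d : sorted geq d -> bounded (size d) (nth 0 d) ->
  (0 <= Delta d 1)%R -> (0 <= Delta (compl_seq d) 1)%R ->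
  DeltaStar (compl_seq d) = DeltaStar d.
Proof.
move=> d_sorted d_bnd d1_ge0 dc1_ge0.
case: (posnP (size d)) => [/size0nil -> //|d_gt0].
have dc_sorted := sorted_compl_seq d_sorted.
have d_m := mval_mindex d_sorted; have dc_m := mval_mindex dc_sorted.
have d_nonincr := sorted_nonincr d_sorted; have dc_nonincr := sorted_nonincr dc_sorted.
rewrite size_compl_seq in dc_m dc_nonincr.
rewrite Delta_slack // in d1_ge0; rewrite Delta_slack // size_compl_seq in dc1_ge0.
have dc_dual := @compl_seq_dual d; have d_dual := dual_seq_sym d_bnd dc_dual.
rewrite !DeltaStar_max_slack // size_compl_seq.
by apply/le_anti/andP; split; apply: max_slack_dual_le => //; apply: bounded_compl_seq.
Qed.

Lemma simple_compl (T : finType) (e : rel T) :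
  simple_graph e -> simple_graph (compl_graph e).
Proof.
case=> e_sym e_irr; split => [x y|x]; last by rewrite /compl_graph eqxx.
by rewrite /compl_graph eq_sym e_sym.
Qed.

Lemma size_deg_seq (T : finType) (e : rel T) : size (deg_seq e) = #|T|.
Proof. by rewrite /deg_seq size_sort size_map -cardT. Qed.

Lemma sorted_deg_seq (T : finType) (e : rel T) : sorted geq (deg_seq e).
Proof. by apply: sort_sorted => x y; exact: leq_total. Qed.

Section SimpleGraph.
Variables (T : finType) (e : rel T).
Hypothesis e_simple : simple_graph e.

(* A vertex is not its own neighbour, so its degree and its degree in the
   complement add up to #|T| - 1. *)
Lemma degree_add_compl x : degree e x + degree (compl_graph e) x = #|T|.-1.
Proof.
case: e_simple => _ e_irr.
have split_T : degree e x + #|[predC [pred y | e x y]]| = #|T| := cardC _.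
rewrite (cardD1 x [predC [pred y | e x y]]) !inE e_irr /= in split_T.
have -> : degree (compl_graph e) x = #|[predD1 [predC [pred y | e x y]] & x]|.
  by apply: eq_card => y; rewrite !inE /compl_graph eq_sym.
by rewrite -split_T addnCA add1n.
Qed.

Lemma bounded_deg_seq : bounded #|T| (nth 0 (deg_seq e)).
Proof.
move=> i lt_iT.
have : nth 0 (deg_seq e) i \in deg_seq e by rewrite mem_nth // size_deg_seq.
rewrite mem_sort => /mapP [x _ ->].
by rewrite -(degree_add_compl x) leq_addr.
Qed.

Lemma deg_seq_compl : deg_seq (compl_graph e) = compl_seq (deg_seq e).
Proof.
have geq_anti : antisymmetric geq by move=> x y /= le_both; apply: anti_leq; rewrite andbC.
apply: (sorted_eq geq_trans geq_anti).
- exact: sorted_deg_seq.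
- exact/sorted_compl_seq/sorted_deg_seq.
rewrite /compl_seq size_deg_seq /deg_seq perm_sort.
have degree_compl x : degree (compl_graph e) x = #|T|.-1 - degree e x.
  by rewrite -(degree_add_compl x) addKn.
rewrite (eq_map degree_compl) map_comp.
by apply: perm_map; rewrite perm_sym perm_rev perm_sort.
Qed.

(* Delta_1 = #{i >= 2 : d_i > 0} - d_1 >= 0: the neighbours of a vertex of
   maximal degree d_1 are themselves not isolated. *)
Lemma Delta1_deg_seq_ge0 : (0 <= Delta (deg_seq e) 1)%R.
Proof.
case: e_simple => e_sym e_irr.
rewrite Delta_slack // /slack /tail_mass /head_excess big_nat1 subn0.
case: (posnP #|T|) => [T0|T_gt0].
  by rewrite size_deg_seq T0 big_geq // nth_default // size_deg_seq T0.
set d := deg_seq e.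
have : nth 0 d 0 \in d by rewrite mem_nth // size_deg_seq.
rewrite {1}/d mem_sort => /mapP [v0 _ d0]; rewrite -/d in d0.
have nonisolated : \sum_(0 <= i < size d) minn 1 (nth 0 d i) = \sum_v minn 1 (degree e v).
  rewrite -(big_nth 0 xpredT (fun x => minn 1 x)).
  by rewrite /d (perm_big _ (permEl (perm_sort _ _))) big_map big_enum.
have star_le : 0 < degree e v0 -> degree e v0 + 1 <= \sum_v minn 1 (degree e v).
  move=> deg_gt0.
  have -> : degree e v0 + 1 = #|[predU1 v0 & [pred y | e v0 y]]|.
    by rewrite cardU1 !inE e_irr addnC.
  rewrite -sum1_card big_mkcond /=; apply: leq_sum => v _.
  case: ifP => //; rewrite !inE => /orP[/eqP ->|adj]; first lia.
  suff : 0 < degree e v by lia.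
  by rewrite /degree (cardD1 v0) !inE e_sym adj.
rewrite big_ltn ?size_deg_seq // d0 in nonisolated.
move: nonisolated star_le; rewrite size_deg_seq d0.
by case: (posnP (degree e v0)) => [->|deg_gt0] nonisolated star_le; lia.
Qed.

End SimpleGraph.

Theorem corollary11 (I : pred nat) (T : finType) (e : rel T) :
  simple_graph e ->
  (classA I e -> classA I (compl_graph e)) /\
  (classB I e -> classB I (compl_graph e)).
Proof.
move=> e_simple.
have d_sorted := sorted_deg_seq e.
have d_bnd : bounded (size (deg_seq e)) (nth 0 (deg_seq e)).
  by rewrite size_deg_seq; exact: bounded_deg_seq.
have dc1_ge0 := Delta1_deg_seq_ge0 (simple_compl e_simple).
rewrite deg_seq_compl // in dc1_ge0.
split=> -[k Delta_k k_in_I]; exists k => //; rewrite deg_seq_compl //.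
- by rewrite Delta_mval_compl_seq.
- by rewrite DeltaStar_compl_seq // Delta1_deg_seq_ge0.
Qed.
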